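(* Let $\{(x_i,w_i)\}_{i=1}^n$ be a set of strategies with proportions $x_i$ and fitnesses $w_i$, and let $\{(Y_j,W_j,c_j)\}_{j=1}^m$ be a set of compound strategies that factors $\{(x_i,w_i)\}_{i=1}^n$. Then the replicator system \[ \dot{x}_i = x_i(w_i - \langle w \rangle), \qquad \langle w \rangle = \sum_{k=1}^n x_k w_k, \] and the nested system \[ \dot{Y}_j = Y_j(W_j - \langle W \rangle), \qquad \dot{y}_{ij} = y_{ij}(w_i - \langle w \rangle_j), \] where $\langle W \rangle = \sum_{k=1}^m Y_k W_k$ and $\langle w \rangle_j = \sum_{k=1}^n y_{kj} w_k$, describe the same dynamics.
   Context: A compound strategy $(Y_j,W_j,c_j)$ of a set of strategies $\{(x_i,w_i)\}_{i=1}^n$ is defined by: a component function $c_j$ with $\sum_{i=1}^n c_j(i) = 1$; a weight $Y_j := \sum_{i=1}^n c_j(i) x_i$; a profile $y_{ij} = \frac{c_j(i) x_i}{Y_j}$; and a fitness $W_j = \sum_{i=1}^n y_{ij} w_i$. A set of compound strategies $\{(Y_j,W_j,c_j)\}_{j=1}^m$ factors a set of strategies $\{(x_i,w_i)\}_{i=1}^n$, with $x_i = \sum_{j: c_j(i)\neq 0} \frac{y_{ij} Y_j}{c_j(i)}$, if for all $1 \le i \le n$, $\sum_{j=1}^m c_j(i) = 1$. *)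

From HB Require Import structures.
From mathcomp Require Import all_boot all_order all_algebra.
From mathcomp Require Import all_classical all_reals all_analysis.
Set Implicit Arguments. Unset Strict Implicit. Unset Printing Implicit Defensive.
Import Order.TTheory GRing.Theory Num.Theory.
Local Open Scope ring_scope.

Section Compound.
Variables (R : realType) (n m : nat).
(* c j i = c_j(i) : component functions (constant in time)
   x i t = x_i(t) : proportion of strategy i at time t
   w i t = w_i(t) : fitness of strategy i at time t *)
Variables (c : 'I_m -> 'I_n -> R) (x w : 'I_n -> R -> R).

Definition is_component (j : 'I_m) : Prop := \sum_(i < n) c j i = 1.

Definition factors : Prop := forall i : 'I_n, \sum_(j < m) c j i = 1.

Definition Yw (j : 'I_m) (t : R) : R := \sum_(i < n) c j i * x i t.

Definition prof (i : 'I_n) (j : 'I_m) (t : R) : R := c j i * x i t / Yw j t.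

Definition Wf (j : 'I_m) (t : R) : R := \sum_(i < n) prof i j t * w i t.

Definition mean_w (t : R) : R := \sum_(k < n) x k t * w k t.

Definition mean_W (t : R) : R := \sum_(k < m) Yw k t * Wf k t.

Definition mean_wj (j : 'I_m) (t : R) : R := \sum_(k < n) prof k j t * w k t.

Definition replicator_at (t : R) : Prop :=
  forall i : 'I_n, is_derive t 1 (x i) (x i t * (w i t - mean_w t)).

Definition nested_at (t : R) : Prop :=
  (forall j : 'I_m, is_derive t 1 (Yw j) (Yw j t * (Wf j t - mean_W t))) /\
  (forall (i : 'I_n) (j : 'I_m),
      is_derive t 1 (prof i j) (prof i j t * (w i t - mean_wj j t))).

End Compound.

From HB Require Import structures.
From mathcomp Require Import all_boot all_order all_algebra.
From mathcomp Require Import all_classical all_reals all_analysis.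
From mathcomp Require Import ring.
Set Implicit Arguments. Unset Printing Implicit Defensive.
Import Order.TTheory GRing.Theory Num.Theory.
Local Open Scope ring_scope.

(** Both systems reduce to equations between derivatives at a single time t.
   Since [c_j(i) x_i = Y_j y_ij], the product rule gives
   [c_j(i) x_i' = Y_j' y_ij + Y_j y_ij'], and [Y_j' = sum_i c_j(i) x_i'].
   The factoring condition [sum_j c_j(i) = 1] makes [<W> = <w>], and it lets
   one recover [x_i'] by summing [c_j(i) x_i'] over [j].  Substituting one
   system into these identities yields the other. *)

Lemma is_deriveP {R : numFieldType} {V W : normedModType R} {f : V -> W}
    {a v : V} {df : W} :
  derivable f a v -> is_derive a v f df <-> 'D_v f a = df.
Proof. by move=> fa; split=> [[]|<-] //; exact: derivableP. Qed.

Section CompoundAlgebra.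
Variables (R : realType) (n m : nat) (c : 'I_m -> 'I_n -> R)
  (x w : 'I_n -> R -> R) (t : R).

Lemma sum_factors_mull (i : 'I_n) (a : R) :
  factors c -> \sum_(j < m) c j i * a = a.
Proof. by move=> fc; rewrite -mulr_suml fc mul1r. Qed.

Lemma Yw_mul_prof (i : 'I_n) (j : 'I_m) :
  Yw c x j t != 0 -> Yw c x j t * prof c x i j t = c j i * x i t.
Proof. by move=> Y0; rewrite /prof; field. Qed.

Lemma Yw_mul_Wf (j : 'I_m) :
  Yw c x j t != 0 ->
  Yw c x j t * Wf c x w j t = \sum_(i < n) c j i * x i t * w i t.
Proof.
move=> Y0; rewrite /Wf mulr_sumr; apply: eq_bigr => i _.
by rewrite mulrA Yw_mul_prof.
Qed.

Lemma mean_W_mean_w :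
  factors c -> (forall j, Yw c x j t != 0) -> mean_W c x w t = mean_w x w t.
Proof.
move=> fc Y0; rewrite /mean_W.
under eq_bigr => j _ do rewrite Yw_mul_Wf //.
rewrite exchange_big /mean_w; apply: eq_bigr => i _.
rewrite -(sum_factors_mull i (x i t * w i t) fc).
by apply: eq_bigr => j _; rewrite mulrA.
Qed.

End CompoundAlgebra.

Section CompoundDerivatives.
Variables (R : realType) (n m : nat) (c : 'I_m -> 'I_n -> R)
  (x : 'I_n -> R -> R) (t : R).
Hypothesis dx : forall i, derivable (x i) t 1.

Lemma Yw_sumE (j : 'I_m) : Yw c x j = \sum_(i < n) (c j i \*: x i).
Proof. by apply/funext => s; rewrite /Yw fct_sumE. Qed.

Lemma derivable_Yw (j : 'I_m) : derivable (Yw c x j) t 1.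
Proof. by rewrite Yw_sumE; apply: derivable_sum => i; exact: derivableZ. Qed.

Lemma derive_Yw (j : 'I_m) :
  'D_1 (Yw c x j) t = \sum_(i < n) c j i * 'D_1 (x i) t.
Proof.
rewrite Yw_sumE derive_sum => [|i]; last exact: derivableZ.
by apply: eq_bigr => i _; rewrite deriveZ.
Qed.

Lemma profE (i : 'I_n) (j : 'I_m) :
  prof c x i j = (c j i \*: x i) * (fun s => (Yw c x j s)^-1).
Proof. by []. Qed.

Variable j : 'I_m.
Hypothesis Y0 : Yw c x j t != 0.

Lemma derivable_prof (i : 'I_n) : derivable (prof c x i j) t 1.
Proof.
rewrite profE; apply: derivableM; first exact: derivableZ.
exact: derivableV Y0 (derivable_Yw j).
Qed.

Lemma derive_Yw_mul_prof (i : 'I_n) :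
  Yw c x j t * 'D_1 (prof c x i j) t + prof c x i j t * 'D_1 (Yw c x j) t
  = c j i * 'D_1 (x i) t.
Proof.
rewrite profE deriveM; last 2 first.
- exact: derivableZ.
- exact: derivableV Y0 (derivable_Yw j).
rewrite deriveV ?deriveZ //; last exact: derivable_Yw.
by rewrite -profE /prof /= -![_ *: _]/(_ * _); field.
Qed.

End CompoundDerivatives.

Section Equivalence.
Variables (R : realType) (n m : nat) (c : 'I_m -> 'I_n -> R)
  (x w : 'I_n -> R -> R) (t : R).
Hypotheses (fc : factors c) (dx : forall i, derivable (x i) t 1)
  (Y0 : forall j, Yw c x j t != 0).

Lemma replicator_nested_at : replicator_at x w t -> nested_at c x w t.
Proof.
move=> Hr; have {}Hr i := (is_deriveP (dx i)).1 (Hr i).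
have HY j : 'D_1 (Yw c x j) t = Yw c x j t * (Wf c x w j t - mean_W c x w t).
  rewrite (derive_Yw c x dx) mean_W_mean_w // mulrBr Yw_mul_Wf //.
  rewrite /Yw mulr_suml -sumrB.
  by apply: eq_bigr => i _; rewrite Hr; ring.
split=> [j | i j]; first by apply/(is_deriveP (derivable_Yw c x dx j)).
apply/(is_deriveP (derivable_prof c x dx j (Y0 j) i)).
have L := derive_Yw_mul_prof c x dx j (Y0 j) i.
apply: (mulfI (Y0 j)); rewrite (canRL (addrK _) L) Hr HY mean_W_mean_w //.
by rewrite /mean_wj -/(Wf c x w j t) /prof; field.
Qed.

Lemma nested_replicator_at : nested_at c x w t -> replicator_at x w t.
Proof.
case=> HY Hp; have {}HY j := (is_deriveP (derivable_Yw c x dx j)).1 (HY j).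
have {}Hp i j := (is_deriveP (derivable_prof c x dx j (Y0 j) i)).1 (Hp i j).
have Hc i j : c j i * 'D_1 (x i) t = c j i * (x i t * (w i t - mean_W c x w t)).
  rewrite -(derive_Yw_mul_prof c x dx j (Y0 j)) HY Hp /mean_wj -/(Wf c x w j t).
  by rewrite /prof; field.
move=> i; apply/(is_deriveP (dx i)).
rewrite -(sum_factors_mull i ('D_1 (x i) t) fc).
under eq_bigr => j _ do rewrite Hc.
by rewrite sum_factors_mull // mean_W_mean_w.
Qed.

End Equivalence.

Theorem mainTheorem1 (R : realType) (n m : nat)
  (c : 'I_m -> 'I_n -> R) (x w : 'I_n -> R -> R) (D : set R) :
  (forall j : 'I_m, is_component c j) ->
  factors c ->
  (forall t, D t -> forall i : 'I_n, derivable (x i) t 1) ->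
  (forall t, D t -> forall j : 'I_m, Yw c x j t != 0) ->
  ((forall t, D t -> replicator_at x w t) <->
   (forall t, D t -> nested_at c x w t)).
Proof.
move=> _ fc dx Y0; split=> H t Dt.
- exact: replicator_nested_at fc (dx t Dt) (Y0 t Dt) (H t Dt).
- exact: nested_replicator_at fc (dx t Dt) (Y0 t Dt) (H t Dt).
Qed.
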